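(* Let $d\ge2$. (a) Fix $n\ge2$ and let $\Sigma(\cdot)$ be a singularly affine equivariant scatter functional defined on all empirical measures $P_n=n^{-1}\sum_{j=1}^n\delta_{X_j}$ on $\mathbb{R}^d$ (with arbitrary, not necessarily distinct, $X_j\in\mathbb{R}^d$). For a $d\times n$ data matrix $X$ with $j$th column $X_j$, write $\Sigma(X):=\Sigma(P_n)$, let $\bar X:=n^{-1}\sum_{j=1}^nX_j$ and $\mathbf{1}_n$ the $n\times1$ vector of ones. Then there is a constant $c_n\ge0$, depending on $\Sigma(\cdot)$, such that for every $d\times n$ matrix $X$, $$\Sigma(X-\bar X\mathbf{1}_n')=c_n\,(X-\bar X\mathbf{1}_n')(X-\bar X\mathbf{1}_n')'.$$ (b) If $\Sigma(\cdot)$ is an affinely equivariant scatter functional defined for all $n$ and all empirical measures $P_n$ on $\mathbb{R}^d$, and is weakly continuous as a function of $P_n$, then $\Sigma\equiv0$.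
   Context: $\mathcal{N}_d$ denotes the set of $d\times d$ nonnegative definite symmetric matrices. A functional $Q\mapsto\Sigma(Q)\in\mathcal{N}_d$ on a set $\mathcal{D}$ of Borel probability measures on $\mathbb{R}^d$ is an affinely equivariant scatter functional iff for every nonsingular $d\times d$ matrix $A$ and $v\in\mathbb{R}^d$, with $f(x)=Ax+v$, and every $Q\in\mathcal{D}$, the image law $Q\circ f^{-1}$ is in $\mathcal{D}$ and $\Sigma(Q\circ f^{-1})=A\Sigma(Q)A'$. It is singularly affine equivariant if the same holds for all $d\times d$ matrices $A$, possibly singular. *)

From HB Require Import structures.
From mathcomp Require Import all_boot all_order all_algebra.
From mathcomp Require Import all_classical all_reals all_analysis.
Set Implicit Arguments. Unset Strict Implicit. Unset Printing Implicit Defensive.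
Import Order.TTheory GRing.Theory Num.Theory.
Import numFieldNormedType.Exports.
Local Open Scope classical_set_scope.
Local Open Scope ring_scope.

(* A (finite) measure on R^d = 'cV[R]_d is represented by its set function,
   evaluated on all subsets (for empirical measures this coincides with the
   Borel measure and is determined by it, since singletons are Borel). *)
Definition setfun (R : realType) (d : nat) := set 'cV[R]_d -> R.

Definition emp (R : realType) (d n : nat) (X : 'M[R]_(d, n)) : setfun R d :=
  fun A => n%:R^-1 * \sum_(j < n) \1_A (col j X).

Definition emp_int (R : realType) (d n : nat) (X : 'M[R]_(d, n))
  (f : 'cV[R]_d -> R) : R := n%:R^-1 * \sum_(j < n) f (col j X).

Definition image_law (R : realType) (d : nat) (Q : setfun R d)
  (f : 'cV[R]_d -> 'cV[R]_d) : setfun R d := fun A => Q (f @^-1` A).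

Definition emp_set (R : realType) (d n : nat) : set (setfun R d) :=
  [set Q | exists X : 'M[R]_(d, n), Q = emp X].
Definition emp_all (R : realType) (d : nat) : set (setfun R d) :=
  [set Q | exists n, (0 < n)%N /\ @emp_set R d n Q].

Definition nnd (R : realType) (d : nat) (S : 'M[R]_d) : Prop :=
  S^T = S /\ forall u : 'cV[R]_d, 0 <= (u^T *m S *m u) ord0 ord0.

Definition equivariant_scatter (R : realType) (d : nat) (P : 'M[R]_d -> Prop)
  (D : set (setfun R d)) (Sigma : setfun R d -> 'M[R]_d) : Prop :=
  (forall Q, D Q -> nnd (Sigma Q)) /\
  forall (A : 'M[R]_d) (v : 'cV[R]_d) (Q : setfun R d), P A -> D Q ->
    D (image_law Q (fun x => A *m x + v)) /\
    Sigma (image_law Q (fun x => A *m x + v)) = A *m Sigma Q *m A^T.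

Definition affine_equivariant (R : realType) (d : nat) :=
  @equivariant_scatter R d (fun A => A \in unitmx).
Definition singularly_affine_equivariant (R : realType) (d : nat) :=
  @equivariant_scatter R d (fun _ => True).

Definition emp_weak_cvg (R : realType) (d : nat) (nk : nat -> nat)
  (Xk : forall k, 'M[R]_(d, nk k)) (n : nat) (X : 'M[R]_(d, n)) : Prop :=
  forall f : 'cV[R]_d -> R, continuous f -> (exists M, forall x, `|f x| <= M) ->
    (fun k => emp_int (Xk k) f) @ \oo --> emp_int X f.

Definition weakly_continuous_emp (R : realType) (d : nat)
  (Sigma : setfun R d -> 'M[R]_d) : Prop :=
  forall (nk : nat -> nat) (Xk : forall k, 'M[R]_(d, nk k)) (n : nat)
    (X : 'M[R]_(d, n)),
    (forall k, (0 < nk k)%N) -> (0 < n)%N -> emp_weak_cvg Xk X ->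
    (fun k => Sigma (emp (Xk k))) @ \oo --> Sigma (emp X).

Definition center_data (R : realType) (d n : nat) (X : 'M[R]_(d, n)) : 'M[R]_(d, n) :=
  X - (n%:R^-1 *: (X *m const_mx 1)) *m (const_mx 1 : 'M[R]_(1, n)).

(* Write [F X] for the scatter of the empirical measure of the data matrix [X].
   Equivariance [F (A X) = A F(X) A^T] under all, possibly singular, [A] turns
   [F X i j] into [h (row i X) (row j X)] for one symmetric bilinear form [h] on
   [R^n]: two rows can be placed freely, and polarization gives additivity.
   Since permuting the data points does not change the empirical measure,
   [h r s = a <r, s> + b (sum r) (sum s)], so centered data give [a X X^T], and
   [a >= 0] by nonnegativity.
   For (b), continuity lets singular [A] be approximated by invertible [A + t I],
   so (a) holds for every [n] with some constant [c_n].  Replicating every data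
   point [m] times does not change the empirical measure, whence [m c_(2m) = c_2];
   so the [2m]-point samples [+- sqrt m e_1, 0, ..., 0] all have scatter
   [2 c_2 e_1 e_1^T], while they converge weakly to the Dirac mass at [0], whose
   scatter vanishes.  Hence [c_2 = 0], every [c_(2m) = 0], and every [P_n],
   replicated to [2n] points and centered, has scatter [0]. *)

From HB Require Import structures.
From mathcomp Require Import all_boot all_order all_algebra.
From mathcomp Require Import all_classical all_reals all_analysis.
From mathcomp Require Import fingroup perm.
From mathcomp Require Import ring lra.
Set Implicit Arguments. Unset Strict Implicit. Unset Printing Implicit Defensive.
Import Order.TTheory GRing.Theory Num.Theory.
Import numFieldNormedType.Exports.
Local Open Scope classical_set_scope.
Local Open Scope ring_scope.

Section MatrixFacts.
Variable R : comNzRingType.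

Lemma mul_mx_tr_entry m n p (P : 'M[R]_(m, n)) (M : 'M[R]_n) (Q : 'M[R]_(p, n)) i j :
  (P *m M *m Q^T) i j = (row i P *m M *m (row j Q)^T) 0 0.
Proof. by rewrite -row_mul !mxE; apply: eq_bigr => l _; rewrite !mxE. Qed.

Lemma col_perm_delta n (s : 'S_n) k :
  col_perm s (delta_mx 0 k : 'rV[R]_n) = delta_mx 0 (s^-1 k)%g.
Proof.
apply/matrixP => i j; rewrite !mxE; congr (_ && _)%:R.
by rewrite -[RHS](inj_eq (@perm_inj _ s)) permKV.
Qed.

Lemma perm_invariant_mx n (H : 'M[R]_n) (j0 j1 : 'I_n) : j0 != j1 ->
  (forall (s : 'S_n) k l, H (s k) (s l) = H k l) ->
  H = (H j0 j0 - H j0 j1)%:M + const_mx (H j0 j1).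
Proof.
move=> j01 Hs; apply/matrixP => k l; rewrite !mxE.
have [<-|kl] := eqVneq k l.
  by rewrite -(Hs (tperm k j0)) tpermL mulr1n subrK.
rewrite mulr0n add0r -(Hs (tperm k j0)) tpermL.
set l' := tperm k j0 l.
have l'j0 : l' != j0 by rewrite -(inj_eq (@perm_inj _ (tperm k j0))) tpermR tpermK eq_sym.
by rewrite -(Hs (tperm l' j1)) tpermL tpermD // eq_sym.
Qed.

Lemma bilinear_form_mx n (h : 'rV[R]_n -> 'rV[R]_n -> R) :
  (forall r s, h r s = h s r) -> (forall a r s, h (a *: r) s = a * h r s) ->
  (forall r r' s, h (r + r') s = h r s + h r' s) ->
  forall r s, h r s = (r *m \matrix_(k, l) h (delta_mx 0 k) (delta_mx 0 l) *m s^T) 0 0.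
Proof.
move=> hC hZ hD.
have h0 s : h 0 s = 0 by rewrite -(scale0r 0) hZ mul0r.
have hsum r s : h r s = \sum_k r 0 k * h (delta_mx 0 k) s.
  rewrite {1}(row_sum_delta r) (big_morph (h^~ s) (fun x y => hD x y s) (h0 s)).
  by apply: eq_bigr => k _; rewrite hZ.
move=> r s; rewrite hsum mxE; under [RHS]eq_bigr do rewrite !mxE big_distrl /=.
rewrite exchange_big; apply: eq_bigr => k _ /=.
rewrite hC hsum big_distrr; apply: eq_bigr => l _ /=; rewrite !mxE hC; ring.
Qed.

Definition row_pair d n (i0 i1 : 'I_d) (r s : 'rV[R]_n) : 'M[R]_(d, n) :=
  delta_mx i0 0 *m r + delta_mx i1 0 *m s.

Lemma row_pair_mulmx d n p (i0 i1 : 'I_d) (r s : 'rV[R]_n) (X : 'M[R]_(n, p)) :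
  row_pair i0 i1 r s *m X = row_pair i0 i1 (r *m X) (s *m X).
Proof. by rewrite /row_pair mulmxDl !mulmxA. Qed.

Lemma row_row_pairl d n (i0 i1 : 'I_d) (r s : 'rV[R]_n) :
  i0 != i1 -> row i0 (row_pair i0 i1 r s) = r.
Proof.
move=> i01; apply/rowP => l; rewrite !mxE !big_ord1 !mxE eqxx (negbTE i01) /=.
by rewrite mul1r mul0r addr0.
Qed.

Lemma row_row_pairr d n (i0 i1 : 'I_d) (r s : 'rV[R]_n) :
  i0 != i1 -> row i1 (row_pair i0 i1 r s) = s.
Proof.
move=> i01; apply/rowP => l; rewrite !mxE !big_ord1 !mxE eqxx eq_sym (negbTE i01) /=.
by rewrite mul1r mul0r add0r.
Qed.

End MatrixFacts.

Section EquivariantMatrixFunction.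
Variables (R : realFieldType) (d n : nat) (F : 'M[R]_(d, n) -> 'M[R]_d) (i0 i1 : 'I_d).
Hypothesis F_mulmx : forall A X, F (A *m X) = A *m F X *m A^T.
Hypothesis F_sym : forall X, (F X)^T = F X.
Hypothesis i01 : i0 != i1.

Let form (r s : 'rV[R]_n) := F (row_pair i0 i1 r s) i0 i1.

Let form_mulmx (a b : 'rV[R]_d) X : form (a *m X) (b *m X) = (a *m F X *m b^T) 0 0.
Proof.
by rewrite /form -row_pair_mulmx F_mulmx mul_mx_tr_entry row_row_pairl // row_row_pairr.
Qed.

Let F_entry X i j : F X i j = form (row i X) (row j X).
Proof. by rewrite !rowE form_mulmx -rowE trmx_delta -colE !mxE. Qed.

Let formC r s : form r s = form s r.
Proof.
rewrite {1}/form -F_sym mxE F_entry.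
by rewrite row_row_pairl // row_row_pairr.
Qed.

Let form_quadratic a b c e r s :
  form (a *: r + b *: s) (c *: r + e *: s) =
  a * c * form r r + (a * e + b * c) * form r s + b * e * form s s.
Proof.
set P := row_pair i0 i1 r s.
have comb x y : x *: r + y *: s = (x *: delta_mx 0 i0 + y *: delta_mx 0 i1) *m P.
  by rewrite mulmxDl -!scalemxAl -!rowE row_row_pairl // row_row_pairr.
rewrite !comb form_mulmx !(linearD, linearZ) /= !trmx_delta.
rewrite !(mulmxDl, mulmxDr, =^~ scalemxAl, =^~ scalemxAr) -!rowE -!colE !mxE.
rewrite !(F_entry P) row_row_pairl // row_row_pairr // (formC s r).
ring.
Qed.

Let formZl x r s : form (x *: r) s = x * form r s.
Proof.
have := form_quadratic x 0 0 1 r s.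
rewrite !scale0r scale1r addr0 add0r => ->; ring.
Qed.

Let form_sqrD u w : form (u + w) (u + w) = form u u + 2 * form u w + form w w.
Proof. by have := form_quadratic 1 1 1 1 u w; rewrite !scale1r => ->; ring. Qed.

Let form_sqrB u w : form (u - w) (u - w) = form u u - 2 * form u w + form w w.
Proof.
by have := form_quadratic 1 (-1) 1 (-1) u w; rewrite !scale1r !scaleN1r => ->; ring.
Qed.

(* Additivity comes from polarization and the parallelogram law, as in the
   Jordan-von Neumann theorem; [d >= 2] only gives two free rows at a time. *)
Let formDl x y z : form (x + y) z = form x z + form y z.
Proof.
have form_double u v : form u (v + v) = 2 * form u v.
  by rewrite -mulr2n -scaler_nat formC formZl formC.
have e1 : (x + z) + (y + z) = (x + y) + (z + z) by rewrite addrACA.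
have e2 : (x - z) + (y - z) = (x + y) - (z + z) by rewrite addrACA opprD.
have e3 : (x + z) - (y + z) = x - y by rewrite opprD addrACA subrr addr0.
have e4 : (x - z) - (y - z) = x - y by rewrite opprD opprK addrACA addNr addr0.
move: (form_sqrD (x + z) (y + z)) (form_sqrB (x + z) (y + z)).
move: (form_sqrD (x - z) (y - z)) (form_sqrB (x - z) (y - z)).
move: (form_sqrD (x + y) (z + z)) (form_sqrB (x + y) (z + z)).
move: (form_sqrD x z) (form_sqrB x z) (form_sqrD y z) (form_sqrB y z).
rewrite e1 e2 e3 e4 !form_double.
lra.
Qed.

Let equivariant_gram X :
  F X = X *m \matrix_(k, l) form (delta_mx 0 k) (delta_mx 0 l) *m X^T.
Proof.
apply/matrixP => i j.
by rewrite mul_mx_tr_entry F_entry (bilinear_form_mx formC formZl formDl).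
Qed.

Hypothesis F_perm : forall (s : 'S_n) X, F (col_perm s X) = F X.

Lemma perm_invariant_equivariant_form (j0 j1 : 'I_n) : j0 != j1 ->
  exists a b : R, forall X, F X = X *m (a%:M + const_mx b) *m X^T.
Proof.
move=> j01.
have form_perm (s : 'S_n) r u : form (col_perm s r) (col_perm s u) = form r u.
  by rewrite /form !col_permE -row_pair_mulmx -col_permE F_perm.
set G := \matrix_(k, l) form (delta_mx 0 k) (delta_mx 0 l).
have G_perm (s : 'S_n) k l : G (s k) (s l) = G k l.
  by rewrite !mxE -[RHS](form_perm (s^-1)%g) !col_perm_delta invgK.
exists (G j0 j0 - G j0 j1), (G j0 j1) => X.
by rewrite -(perm_invariant_mx j01 G_perm) equivariant_gram.
Qed.

End EquivariantMatrixFunction.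

Lemma exists_distinct_ords n : (2 <= n)%N -> exists i0 i1 : 'I_n, i0 != i1.
Proof. by move=> n2; exists (Ordinal (ltnW n2)), (Ordinal n2). Qed.

Lemma nnd_diag_ge0 (R : realType) d (S : 'M[R]_d) i : nnd S -> 0 <= S i i.
Proof.
by move=> [_ /(_ (delta_mx i 0))]; rewrite trmx_delta -rowE -colE !mxE.
Qed.

Definition row_sums (R : nzRingType) d n (X : 'M[R]_(d, n)) : 'cV[R]_d :=
  X *m const_mx 1.

Definition dipole (R : nzRingType) d n (i : 'I_d) (a b : 'I_n) : 'M[R]_(d, n) :=
  delta_mx i 0 *m (delta_mx 0 a - delta_mx 0 b : 'rV[R]_n).

Section Dipole.
Variables (R : comNzRingType) (d n : nat) (i : 'I_d) (a b : 'I_n).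

Lemma dipole_row_sums : row_sums (dipole R i a b) = 0.
Proof. by rewrite /row_sums /dipole -mulmxA mulmxBl -!rowE !row_const subrr mulmx0. Qed.

Lemma dipole_gram : a != b -> dipole R i a b *m (dipole R i a b)^T = delta_mx i i *+ 2.
Proof.
move=> ab; set u : 'rV[R]_n := delta_mx 0 a - delta_mx 0 b.
have uu : u *m u^T = delta_mx 0 0 *+ 2.
  rewrite /u linearB /= !trmx_delta mulmxBl !mulmxBr !mul_delta_mx_cond.
  by rewrite !eqxx (negbTE ab) eq_sym (negbTE ab) !mulr0n subr0 sub0r opprK -mulr2n.
rewrite /dipole -/u trmx_mul trmx_delta mulmxA -(mulmxA (delta_mx i 0)) uu.
by rewrite -scaler_nat -scalemxAr -scalemxAl !mul_delta_mx scaler_nat.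
Qed.

End Dipole.

Lemma centered_equivariant_gram (R : realType) d n (F : 'M[R]_(d, n) -> 'M[R]_d) :
  (2 <= d)%N -> (2 <= n)%N ->
  (forall A X, F (A *m X) = A *m F X *m A^T) -> (forall X, nnd (F X)) ->
  (forall (s : 'S_n) X, F (col_perm s X) = F X) ->
  exists c : R, 0 <= c /\ forall X, row_sums X = 0 -> F X = c *: (X *m X^T).
Proof.
move=> d2 n2 F_mulmx F_nnd F_perm.
have [i0 [i1 i01]] := exists_distinct_ords d2.
have [j0 [j1 j01]] := exists_distinct_ords n2.
have F_sym X : (F X)^T = F X by case: (F_nnd X).
have [a [b FE]] := perm_invariant_equivariant_form F_mulmx F_sym i01 F_perm j01.
have F_centered X : row_sums X = 0 -> F X = a *: (X *m X^T).
  move=> X1; rewrite FE mulmxDr mulmxDl mul_mx_scalar -scalemxAl.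
  have -> : const_mx b = (const_mx 1 : 'cV[R]_n) *m const_mx b :> 'M[R]_n.
    by apply/matrixP => k l; rewrite !mxE big_ord1 !mxE mul1r.
  by rewrite mulmxA -/(row_sums X) X1 !mul0mx addr0.
exists a; split => //.
have := nnd_diag_ge0 i0 (F_nnd (dipole R i0 j0 j1)).
rewrite F_centered ?dipole_row_sums // dipole_gram // mxE mulmxnE mxE !eqxx /=.
by rewrite pmulr_lge0.
Qed.

Lemma sumr_modn (V : nmodType) (G : nat -> V) m p :
  \sum_(0 <= j < m * p) G (j %% p)%N = (\sum_(0 <= j < p) G j) *+ m.
Proof.
elim: m => [|m IH]; first by rewrite mul0n big_geq.
rewrite mulSn (@big_cat_nat _ _ _ p) ?leq_addr //= mulrS; congr (_ + _).
  by apply: eq_big_nat => j /andP[_ hj]; rewrite modn_small.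
by rewrite -{1}[p]add0n big_addn addKn -IH; apply: eq_bigr => j _; rewrite modnDr.
Qed.

Definition repeat_cols (R : Type) d n m (X : 'M[R]_(d, n.+1)) : 'M[R]_(d, m * n.+1) :=
  \matrix_(i, j) X i (inord (j %% n.+1)).

Section RepeatCols.
Variables (R : comNzRingType) (d n m : nat) (X : 'M[R]_(d, n.+1)).

Lemma sum_repeat (V : nmodType) (G : 'I_n.+1 -> V) :
  \sum_(j < m * n.+1) G (inord (j %% n.+1)) = (\sum_j G j) *+ m.
Proof.
rewrite -(big_mkord xpredT (fun j => G (inord (j %% n.+1)))).
rewrite (sumr_modn (fun j => G (inord j))) big_mkord.
by congr (_ *+ _); apply: eq_bigr => j _; rewrite inord_val.
Qed.

Lemma repeat_cols_gram :
  repeat_cols m X *m (repeat_cols m X)^T = (X *m X^T) *+ m.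
Proof.
apply/matrixP => i j; rewrite mulmxnE !mxE.
rewrite (eq_bigr (fun k : 'I_(m * n.+1) =>
  (fun l => X i l * X j l) (inord (k %% n.+1)))); last first.
  by move=> k _; rewrite !mxE.
rewrite (sum_repeat (fun l => X i l * X j l)); congr (_ *+ _).
by apply: eq_bigr => l _; rewrite !mxE.
Qed.

Lemma repeat_cols_row_sums : row_sums (repeat_cols m X) = row_sums X *+ m.
Proof.
apply/matrixP => i j; rewrite mulmxnE !mxE.
rewrite (eq_bigr (fun k : 'I_(m * n.+1) =>
  (fun l => X i l * 1) (inord (k %% n.+1)))); last first.
  by move=> k _; rewrite !mxE.
rewrite (sum_repeat (fun l => X i l * 1)); congr (_ *+ _).
by apply: eq_bigr => l _; rewrite !mxE.
Qed.

End RepeatCols.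

Section EmpiricalMeasure.
Variables (R : realType) (d n : nat).
Implicit Types (X : 'M[R]_(d, n)) (A : 'M[R]_d) (v : 'cV[R]_d).

Lemma image_law_emp A v X :
  image_law (emp X) (fun x => A *m x + v) = emp (A *m X + v *m const_mx 1).
Proof.
apply/funext => B; rewrite /image_law /emp; congr (_ * _); apply: eq_bigr => j _.
have -> : col j (A *m X + v *m const_mx 1) = A *m col j X + v.
  apply/matrixP => i k; rewrite !mxE; congr (_ + _).
    by apply: eq_bigr => l _; rewrite !mxE.
  by rewrite big_ord1 !mxE mulr1 (ord1 k).
by rewrite !indicE.
Qed.

Lemma emp_col_perm (s : 'S_n) X : emp (col_perm s X) = emp X.
Proof.
apply/funext => B; rewrite /emp; congr (_ * _).
rewrite [RHS](reindex_inj (@perm_inj _ s)) /=; apply: eq_bigr => j _.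
by congr (\1_B _); apply/matrixP => i k; rewrite !mxE.
Qed.

Lemma center_data_row_sums X : (0 < n)%N -> row_sums (center_data X) = 0.
Proof.
move=> n0; rewrite /row_sums /center_data mulmxBl -mulmxA.
have -> : (const_mx 1 : 'M[R]_(1, n)) *m const_mx 1 = n%:R%:M.
  apply/matrixP => i j; rewrite !mxE (ord1 i) (ord1 j) mulr1n.
  by under eq_bigr do rewrite !mxE mulr1; rewrite sumr_const card_ord.
by rewrite mul_mx_scalar scalerA mulfV ?scale1r ?subrr // pnatr_eq0 -lt0n.
Qed.

Lemma emp_repeat_cols m (Y : 'M[R]_(d, n.+1)) :
  (0 < m)%N -> emp (repeat_cols m Y) = emp Y.
Proof.
move=> m0; apply/funext => B; rewrite /emp.
rewrite (eq_bigr (fun j : 'I_(m * n.+1) =>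
  (fun k => \1_B (col k Y)) (inord (j %% n.+1)))); last first.
  by move=> j _; congr (\1_B _); apply/matrixP => i k; rewrite !mxE.
rewrite (sum_repeat m (fun k => \1_B (col k Y))) -mulr_natl natrM.
by field; rewrite nat1r !pnatr_eq0 /= -lt0n.
Qed.

End EmpiricalMeasure.

Section EquivariantScatter.
Variables (R : realType) (d : nat) (P : 'M[R]_d -> Prop) (D : set (setfun R d)).
Variable Sigma : setfun R d -> 'M[R]_d.
Hypothesis Sigma_equiv : equivariant_scatter P D Sigma.

Lemma scatter_emp_mulmx n A (X : 'M[R]_(d, n)) : P A -> D (emp X) ->
  Sigma (emp (A *m X)) = A *m Sigma (emp X) *m A^T.
Proof.
move=> PA DX; have [_ <-] := Sigma_equiv.2 A 0 _ PA DX.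
by rewrite image_law_emp mul0mx addr0.
Qed.

Lemma scatter_emp_center n (X : 'M[R]_(d, n)) : P 1%:M -> D (emp X) ->
  Sigma (emp (center_data X)) = Sigma (emp X).
Proof.
move=> P1 DX; have [_ E] := Sigma_equiv.2 1%:M (- (n%:R^-1 *: (X *m const_mx 1))) _ P1 DX.
by rewrite image_law_emp mul1mx mulNmx mul1mx trmx1 mulmx1 in E.
Qed.

End EquivariantScatter.

Lemma scatter_emp_centered (R : realType) d n (Sigma : setfun R d -> 'M[R]_d) :
  (2 <= d)%N -> (2 <= n)%N -> (forall X : 'M[R]_(d, n), nnd (Sigma (emp X))) ->
  (forall A (X : 'M[R]_(d, n)), Sigma (emp (A *m X)) = A *m Sigma (emp X) *m A^T) ->
  exists c : R, 0 <= c /\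
    forall Y : 'M[R]_(d, n), row_sums Y = 0 -> Sigma (emp Y) = c *: (Y *m Y^T).
Proof.
move=> d2 n2 Sigma_nnd Sigma_mulmx.
by apply: centered_equivariant_gram => // s X; rewrite emp_col_perm.
Qed.

Section ShiftToUnit.
Variables (R : realType) (d : nat) (A : 'M[R]_d).

(* Of [d + 1] distinct shifts, one avoids the at most [d] eigenvalues of [- A]. *)
Lemma shift_unitmx_le e : 0 < e -> exists t, 0 < t <= e /\ A + t%:M \in unitmx.
Proof.
move=> e0; pose shift (m : nat) : R := e / m.+1%:R.
have shift_gt0 m : 0 < shift m by rewrite divr_gt0 ?ltr0Sn.
have [/hasP [m _ Am]|no_shift] :=
  boolP (has (fun m => A + (shift m)%:M \in unitmx) (iota 0 d.+1)).
  exists (shift m); split => //; rewrite shift_gt0 /=.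
  by rewrite /shift ler_pdivrMr ?ltr0Sn // ler_peMr ?(ltW e0) // ler1n.
pose rs := map (fun m => - shift m) (iota 0 d.+1).
have rs_roots : all (root (char_poly A)) rs.
  apply/allP => x /mapP [m m_d ->]; rewrite -eigenvalue_root_char.
  have : A + (shift m)%:M \notin unitmx.
    by apply: contra no_shift => Am; apply/hasP; exists m.
  rewrite unitmxE unitfE negbK => /det0P [v v0].
  rewrite mulmxDr mul_mx_scalar => /eqP; rewrite addr_eq0 => /eqP vA.
  by apply/eigenvalueP; exists v; rewrite // vA scaleNr.
have rs_uniq : uniq rs.
  rewrite map_inj_uniq ?iota_uniq // => m m' /eqP; rewrite eqr_opp => /eqP E.
  have : (m.+1%:R : R) = m'.+1%:R.
    by apply/invr_inj; apply: (mulfI (lt0r_neq0 e0)).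
  by move/eqP; rewrite eqr_nat eqSS => /eqP.
have := max_poly_roots (monic_neq0 (char_poly_monic A)) rs_roots rs_uniq.
by rewrite size_map size_iota size_char_poly ltnn.
Qed.

Lemma shift_unitmx_cvg0 :
  exists t : nat -> R, (forall k, A + (t k)%:M \in unitmx) /\ t @ \oo --> 0.
Proof.
have /choice [t tP] k : exists t, 0 < t <= harmonic k /\ A + t%:M \in unitmx.
  exact: shift_unitmx_le (harmonic_gt0 k).
exists t; split => [k|]; first by case: (tP k).
apply: (@squeeze_cvgr _ _ _ _ (fun=> 0) harmonic); last exact: cvg_harmonic.
  by apply: nearW => k; case: (tP k) => /andP[/ltW -> ->].
exact: cvg_cst.
Qed.

Lemma conj_shift_cvg (S : 'M[R]_d) (t : nat -> R) : t @ \oo --> 0 ->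
  (A + (t k)%:M) *m S *m (A + (t k)%:M)^T @[k --> \oo] --> A *m S *m A^T.
Proof.
move=> t0.
have -> : (fun k => (A + (t k)%:M) *m S *m (A + (t k)%:M)^T) =
    (fun k => A *m S *m A^T + t k *: (S *m A^T + A *m S) + (t k * t k) *: S).
  apply/funext => k; rewrite linearD /= tr_scalar_mx mulmxDl mul_scalar_mx.
  rewrite mulmxDr mul_mx_scalar mulmxDl -scalemxAl scalerDr scalerA scalerDr.
  by rewrite !addrA addrAC [_ + t k *: (A *m S)]addrAC.
have t_lin : t k *: (S *m A^T + A *m S) @[k --> \oo] --> (0 : 'M[R]_d).
  by rewrite -(scale0r (S *m A^T + A *m S)); apply: cvgZ t0 (cvg_cst _).
have t_sqr : (t k * t k) *: S @[k --> \oo] --> (0 : 'M[R]_d).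
  by rewrite -(scale0r S) -(mulr0 0); apply: cvgZ (cvgM t0 t0) (cvg_cst _).
rewrite -[X in _ --> X]addr0 -[X in _ --> X]addr0.
by apply: cvgD; first apply: cvgD; first exact: cvg_cst.
Qed.

End ShiftToUnit.

Lemma emp_weak_cvg_shift (R : realType) d n (A : 'M[R]_d) (t : nat -> R)
    (X : 'M[R]_(d, n)) : t @ \oo --> 0 ->
  emp_weak_cvg (fun k => (A + (t k)%:M) *m X) (A *m X).
Proof.
move=> t0 f f_cont _; rewrite /emp_int; apply: cvgM; first exact: cvg_cst.
apply: (@cvg_big R 'I_n +%R 0 xpredT (@add_continuous R) nat \oo (index_enum 'I_n)
  (fun j k => f (col j ((A + (t k)%:M) *m X))) (fun j => f (col j (A *m X)))) => // j _.
have -> : (fun k => f (col j ((A + (t k)%:M) *m X))) =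
    f \o (fun k => A *m col j X + t k *: col j X).
  by apply/funext => k /=; rewrite colE -mulmxA -colE mulmxDl mul_scalar_mx.
rewrite colE -mulmxA -colE; apply: (continuous_cvg _ (f_cont _)).
rewrite -[X in _ --> X]addr0; apply: cvgD; first exact: cvg_cst.
by rewrite -(scale0r (col j X)); apply: cvgZ t0 (cvg_cst _).
Qed.

Lemma emp_all_emp (R : realType) d n (X : 'M[R]_(d, n)) : (0 < n)%N -> emp_all (emp X).
Proof. by move=> n0; exists n; split => //; exists X. Qed.

Lemma continuous_scatter_emp_mulmx (R : realType) d (Sigma : setfun R d -> 'M[R]_d) :
  affine_equivariant (@emp_all R d) Sigma -> weakly_continuous_emp Sigma ->
  forall n A (X : 'M[R]_(d, n)), (0 < n)%N ->
    Sigma (emp (A *m X)) = A *m Sigma (emp X) *m A^T.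
Proof.
move=> Sigma_equiv Sigma_cont n A X n0.
have [t [At t0]] := shift_unitmx_cvg0 A.
have := Sigma_cont _ _ _ _ (fun=> n0) n0 (emp_weak_cvg_shift (A := A) (X := X) t0).
have -> : (fun k => Sigma (emp ((A + (t k)%:M) *m X))) =
    (fun k => (A + (t k)%:M) *m Sigma (emp X) *m (A + (t k)%:M)^T).
  by apply/funext => k; rewrite (scatter_emp_mulmx Sigma_equiv (At k) (emp_all_emp X n0)).
by move=> /(cvg_unique _ (conj_shift_cvg (A := A) (S := Sigma (emp X)) t0)) ->.
Qed.

Lemma emp_int_subr (R : realType) d n (X : 'M[R]_(d, n)) (f : 'cV[R]_d -> R) :
  (0 < n)%N -> emp_int X f - f 0 = n%:R^-1 * \sum_j (f (col j X) - f 0).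
Proof.
move=> n0; rewrite /emp_int sumrB sumr_const card_ord.
by field; rewrite pnatr_eq0 -lt0n.
Qed.

Lemma emp_int_two_cols_le (R : realType) d n (X : 'M[R]_(d, n)) (a b : 'I_n)
    (f : 'cV[R]_d -> R) (M : R) :
  a != b -> (forall j, j != a -> j != b -> col j X = 0) -> (forall x, `|f x| <= M) ->
  `|emp_int X f - f 0| <= n%:R^-1 * (4 * M).
Proof.
move=> ab Xab fM; have n0 : (0 < n)%N := leq_ltn_trans (leq0n a) (ltn_ord a).
have f_sub x : `|f x - f 0| <= 2 * M.
  by rewrite mulr2n mulrDl mul1r (le_trans (ler_normB _ _)) // lerD.
rewrite emp_int_subr // normrM ger0_norm ?invr_ge0 // ler_wpM2l ?invr_ge0 //.
rewrite (bigD1 a) //= (bigD1 b) 1?eq_sym //= big1 ?addr0; last first.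
  by move=> j /andP[jb ja]; rewrite Xab ?subrr.
by rewrite (le_trans (ler_normD _ _)) // -[4]/(2 + 2)%:R natrD mulrDl lerD.
Qed.

Section ContinuousScatter.
Variables (R : realType) (d : nat) (Sigma : setfun R d -> 'M[R]_d).
Hypothesis d2 : (2 <= d)%N.
Hypothesis Sigma_equiv : affine_equivariant (@emp_all R d) Sigma.
Hypothesis Sigma_cont : weakly_continuous_emp Sigma.

Lemma continuous_scatter_centered n : (2 <= n)%N ->
  exists c : R, forall Y : 'M[R]_(d, n),
    row_sums Y = 0 -> Sigma (emp Y) = c *: (Y *m Y^T).
Proof.
move=> n2; have n0 := ltnW n2.
have Sigma_mulmx A (X : 'M[R]_(d, n)) :=
  continuous_scatter_emp_mulmx Sigma_equiv Sigma_cont A X n0.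
have Sigma_nnd (X : 'M[R]_(d, n)) := Sigma_equiv.1 _ (emp_all_emp X n0).
by have [c [_ Sc]] := scatter_emp_centered d2 n2 Sigma_nnd Sigma_mulmx; exists c.
Qed.

Lemma continuous_scatter_gram_eq n (Y Y' : 'M[R]_(d, n)) : (2 <= n)%N ->
  row_sums Y = 0 -> row_sums Y' = 0 -> Y *m Y^T = Y' *m Y'^T ->
  Sigma (emp Y) = Sigma (emp Y').
Proof.
by move=> n2 Y0 Y'0 YY; have [c Sc] := continuous_scatter_centered n2; rewrite !Sc // YY.
Qed.

Let i0 : 'I_d := Ordinal (ltnW d2).
Let pair_dipole : 'M[R]_(d, 2) := dipole R i0 ord0 ord_max.

(* Tends weakly to the Dirac mass at [0], yet has the Gram matrix of [k + 1]
   copies of [pair_dipole]. *)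
Let spread k : 'M[R]_(d, k.+1 * 2) :=
  Num.sqrt k.+1%:R *: dipole R i0 (ord0 : 'I_(k.+1 * 2)) ord_max.

Lemma emp_weak_cvg_spread : emp_weak_cvg spread (0 : 'M[R]_(d, 2)).
Proof.
move=> f f_cont [M fM].
have -> : emp_int (0 : 'M[R]_(d, 2)) f = f 0.
  rewrite /emp_int (eq_bigr (fun=> f 0)) => [|j _].
    by rewrite sumr_const card_ord; field.
  by congr f; apply/matrixP => i k; rewrite !mxE.
have bound k : `|emp_int (spread k) f - f 0| <= 2 * M * harmonic k.
  have -> : 2 * M * harmonic k = (k.+1 * 2)%:R^-1 * (4 * M).
    by rewrite /harmonic /= natrM; field.
  apply: (emp_int_two_cols_le (a := ord0) (b := ord_max)) fM => // j j0 jmax.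
  apply/matrixP => i l; rewrite !mxE big_ord1 !mxE (negbTE j0) (negbTE jmax).
  by rewrite !andbF subrr !mulr0.
have bound0 : 2 * M * harmonic k @[k --> \oo] --> 2 * M * 0.
  exact: cvgM (cvg_cst _) cvg_harmonic.
rewrite mulr0 in bound0.
apply: (@squeeze_cvgr _ _ _ _ (fun k => f 0 - 2 * M * harmonic k)
  (fun k => f 0 + 2 * M * harmonic k)).
- by apply: nearW => k; rewrite -ler_distl.
- by rewrite -[X in _ --> X]subr0; apply: cvgB => //; exact: cvg_cst.
- by rewrite -[X in _ --> X]addr0; apply: cvgD => //; exact: cvg_cst.
Qed.

Lemma scatter_spread k : Sigma (emp (spread k)) = Sigma (emp pair_dipole).
Proof.
rewrite -(emp_repeat_cols pair_dipole (ltn0Sn k)).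
apply: continuous_scatter_gram_eq.
- by rewrite mulnC leq_pmulr.
- by rewrite /row_sums -scalemxAl -/(row_sums _) dipole_row_sums scaler0.
- by rewrite repeat_cols_row_sums dipole_row_sums mul0rn.
rewrite repeat_cols_gram linearZ /= -scalemxAl -scalemxAr scalerA -expr2.
by rewrite sqr_sqrtr ?ler0n // scaler_nat !dipole_gram.
Qed.

Lemma scatter_pair_dipole_eq0 : Sigma (emp pair_dipole) = 0.
Proof.
have := @Sigma_cont _ _ _ _ (fun k => isT : (0 < k.+1 * 2)%N) (isT : (0 < 2)%N)
  emp_weak_cvg_spread.
have [c Sc] := continuous_scatter_centered (leqnn 2).
rewrite Sc ?mul0mx ?scaler0; last exact: mul0mx.
have -> : (fun k => Sigma (emp (spread k))) = (fun=> Sigma (emp pair_dipole)).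
  by apply/funext => k; exact: scatter_spread.
by move=> lim; exact: cvg_unique _ (cvg_cst _) lim.
Qed.

Lemma scatter_even_centered_eq0 n (Y : 'M[R]_(d, n)) :
  (0 < n)%N -> (2 %| n)%N -> row_sums Y = 0 -> Sigma (emp Y) = 0.
Proof.
move=> n0 /dvdnP[m nm]; move: Y n0; rewrite nm muln_gt0 andbT => Y m0 Y0.
have [c Sc] := continuous_scatter_centered (leq_pmull 2 m0).
suff c0 : c = 0 by rewrite Sc // c0 scale0r.
have := Sc (repeat_cols m pair_dipole).
rewrite repeat_cols_row_sums dipole_row_sums mul0rn emp_repeat_cols //.
rewrite scatter_pair_dipole_eq0 repeat_cols_gram dipole_gram // => /(_ erefl).
move/(congr1 (fun S : 'M[R]_d => S i0 i0)); rewrite !mxE !mulmxnE !mxE eqxx /=.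
move/esym/eqP; rewrite mulf_eq0 -mulrnA pnatr_eq0 muln_eq0 /= (gtn_eqF m0).
by rewrite orbF => /eqP.
Qed.

Lemma continuous_scatter_eq0 Q : emp_all Q -> Sigma Q = 0.
Proof.
move=> [n [n0 [X ->]]]; case: n n0 X => [//|n] _ X.
rewrite -(emp_repeat_cols X (isT : (0 < 2)%N)).
have emp_all_X2 := emp_all_emp (repeat_cols 2 X) (isT : (0 < 2 * n.+1)%N).
rewrite -(scatter_emp_center Sigma_equiv (unitmx1 _ _) emp_all_X2).
by apply: scatter_even_centered_eq0; rewrite ?dvdn_mulr ?center_data_row_sums.
Qed.

End ContinuousScatter.

Theorem theorem5 (R : realType) (d : nat) (hd : (2 <= d)%N) :
  (forall (n : nat) (Sigma : setfun R d -> 'M[R]_d), (2 <= n)%N ->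
     singularly_affine_equivariant (@emp_set R d n) Sigma ->
     exists c : R, 0 <= c /\
       forall X : 'M[R]_(d, n),
         Sigma (emp (center_data X)) = c *: (center_data X *m (center_data X)^T))
  /\
  (forall Sigma : setfun R d -> 'M[R]_d,
     affine_equivariant (@emp_all R d) Sigma ->
     weakly_continuous_emp Sigma ->
     forall Q, @emp_all R d Q -> Sigma Q = 0).
Proof.
split=> [n Sigma n2 Sigma_equiv | Sigma]; last exact: continuous_scatter_eq0 hd.
have emp_setX (X : 'M[R]_(d, n)) : emp_set n (emp X) by exists X.
have [c [c0 Sc]] := scatter_emp_centered hd n2 (fun X => Sigma_equiv.1 _ (emp_setX X))
  (fun A X => scatter_emp_mulmx Sigma_equiv I (emp_setX X)).
by exists c; split=> // X; rewrite Sc // center_data_row_sums // ltnW.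
Qed.
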